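(* Let $F\subsetneq K$ be fields of characteristic $0$, with $F$ a proper nonempty subfield of $K$. Let $p(x)=\sum_{k=0}^{n}a_k x^k\in K[x]$ be non-constant with $a_n\neq 0$, and let $q(x)=\sum_{j=0}^{m}b_j x^j\in K[x]\setminus F[x]$ with $b_m\neq 0$. Suppose $a_n,b_m,b_0\in F$. Then $p\circ q\notin F[x]$ and $D_F(p\circ q)=D_F(q)$.
   Context: For sets $F\subset K$ and $p(x)=\sum_{k=0}^{n}a_kx^k\in K[x]$ with $a_n\neq 0$, the $F$ deficit $D_F(p)$ is defined as follows: if $p\in K[x]\setminus F[x]$, then $D_F(p)=n-\max\{0\le k\le n: a_k\notin F\}$; if $p\in F[x]$, then $D_F(p)=n$. Here $F[x]$ denotes the set of polynomials with all coefficients in $F$. *)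

From mathcomp Require Import all_boot all_order all_algebra.
Set Implicit Arguments. Unset Strict Implicit. Unset Printing Implicit Defensive.
Import GRing.Theory.
Local Open Scope ring_scope.

Definition is_subfield (K : fieldType) (F : {pred K}) : Prop :=
  0 \in F /\ 1 \in F /\
  (forall x y, x \in F -> y \in F -> x + y \in F) /\
  (forall x, x \in F -> - x \in F) /\
  (forall x y, x \in F -> y \in F -> x * y \in F) /\
  (forall x, x \in F -> x^-1 \in F).

Definition deficit (K : fieldType) (F : {pred K}) (p : {poly K}) : nat :=
  if p \is a polyOver F then (size p).-1
  else subn (size p).-1 (\max_(k < size p | (p`_k)%R \notin F) (k : nat))%N.

(** Write [q = B + S], where [S] collects the coefficients of [q] up to the
    last one [q_r] outside [F] and [B] the remaining ones, so [B] has
    coefficients in [F] and the same degree [m] and leading coefficient [b]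
    as [q].  Then [p \Po q] agrees with [a q^(n+1)] above degree [n m], and
    [q^(n+1) = B^(n+1) + S T] with [T = \sum_i q^(n-i) B^i] of leading
    coefficient [(n+1) b^n].  Hence the coefficients of [p \Po q] above
    [n m + r] are those of [a B^(n+1)], which lie in [F], while the one at
    [n m + r] is off by [a (n+1) b^n q_r] from one in [F], hence not in [F].
    The hypothesis [b_0 \in F] gives [r > 0], which keeps the lower-order
    terms of [p \Po q] below degree [n m + r]. *)

From HB Require Import structures.
From mathcomp Require Import all_boot all_order all_algebra.
From mathcomp Require Import zify.
Import GRing.Theory.
Set Implicit Arguments. Unset Strict Implicit.

Local Open Scope ring_scope.

Lemma size_poly_eq_succ (R : nzSemiRingType) (p : {poly R}) n :
  (size p <= n.+1)%N -> p`_n != 0 -> size p = n.+1.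
Proof.
move=> sp pn; apply/eqP; rewrite eqn_leq sp ltnNge.
by apply: contra pn => /leq_sizeP ->.
Qed.

Lemma size_lead_coef_sum_powers (R : idomainType) (X Y : {poly R}) k :
  X != 0 -> size Y = size X -> lead_coef Y = lead_coef X -> k.+1%:R != 0 :> R ->
  let T := \sum_(i < k.+1) X ^+ (k - i) * Y ^+ i in
  size T = ((size X).-1 * k).+1 /\ lead_coef T = lead_coef X ^+ k *+ k.+1.
Proof.
move=> nzX sY lY k1 T.
have nzY : Y != 0 by rewrite -size_poly_eq0 sY size_poly_eq0.
have sizeE (i : 'I_k.+1) : size (X ^+ (k - i) * Y ^+ i) = ((size X).-1 * k).+1.
  rewrite size_mul ?expf_neq0 // (polySpred (expf_neq0 _ nzX)).
  rewrite (polySpred (expf_neq0 _ nzY)) !size_exp sY addSn addnS /=.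
  by rewrite -mulnDr subnK // -ltnS.
have leadE (i : 'I_k.+1) : lead_coef (X ^+ (k - i) * Y ^+ i) = lead_coef X ^+ k.
  by rewrite lead_coefM !lead_coef_exp lY -exprD subnK // -ltnS.
have topT : T`_((size X).-1 * k) = lead_coef X ^+ k *+ k.+1.
  rewrite coef_sum -[k.+1 in RHS]card_ord -sumr_const; apply: eq_bigr => i _.
  by rewrite -(leadE i) lead_coefE sizeE.
have sT : size T = ((size X).-1 * k).+1.
  apply: size_poly_eq_succ; last first.
    by rewrite topT -mulr_natr mulf_neq0 ?expf_neq0 ?lead_coef_eq0.
  by rewrite (leq_trans (size_sum _ _ _)) //; apply/bigmax_leqP => i _; rewrite sizeE.
by split=> //; rewrite lead_coefE sT.
Qed.

Lemma size_lead_coef_subXX (R : idomainType) (B S : {poly R}) k :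
  (size S < size B)%N -> S != 0 -> k.+1%:R != 0 :> R ->
  size ((B + S) ^+ k.+1 - B ^+ k.+1) = ((size B).-1 * k + size S)%N /\
  lead_coef ((B + S) ^+ k.+1 - B ^+ k.+1) = lead_coef B ^+ k *+ k.+1 * lead_coef S.
Proof.
move=> sSB nzS k1.
have nzBS : B + S != 0 by rewrite -size_poly_eq0 size_polyDl // -lt0n (leq_ltn_trans _ sSB).
have [sT lT] := size_lead_coef_sum_powers (k := k) nzBS
  (esym (size_polyDl sSB)) (esym (lead_coefDl sSB)) k1.
rewrite subrXX addrAC subrr add0r /=.
set T := \sum_(i < k.+1) _ in sT lT *.
have nzT : T != 0 by rewrite -size_poly_eq0 sT.
rewrite (size_polyDl sSB) (lead_coefDl sSB) in sT lT.
rewrite size_mul // lead_coefM lT mulrC.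
by split=> //; rewrite sT addnS /= addnC.
Qed.

Lemma size_comp_poly_sub_lead (R : comNzRingType) (p q : {poly R}) :
  (size (p \Po q - lead_coef p *: q ^+ (size p).-1)%R
     <= ((size p).-2 * (size q).-1).+1)%N.
Proof.
rewrite comp_polyE; case: (size p) (lead_coefE p) => [|n] /= ->.
  by rewrite big_ord0 sub0r size_opp expr0 (leq_trans (size_scale_leq _ _)) ?size_poly1.
rewrite big_ord_recr /= addrK (leq_trans (size_sum _ _ _)) //.
apply/bigmax_leqP => i _; rewrite (leq_trans (size_scale_leq _ _)) //.
rewrite (leq_trans (size_poly_exp_leq _ _)) // ltnS mulnC leq_mul2r.
by have := ltn_ord i; lia.
Qed.

Lemma polyOver_last_notin (K : fieldType) (F : {pred K}) (q : {poly K}) :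
  q \isn't a polyOver F ->
  exists r, [/\ (r < size q)%N, q`_r \notin F &
              forall i, (r < i < size q)%N -> q`_i \in F].
Proof.
move=> qF.
have exP : exists i, (i < size q)%N && (q`_i \notin F).
  have /(has_nthP 0) [k kq qk] : has [predC F] q by rewrite has_predC.
  by exists k; rewrite kq.
have ubP i : (i < size q)%N && (q`_i \notin F) -> (i <= size q)%N.
  by case/andP => /ltnW.
have [r /andP [rq qr] maxr] := ex_maxnP exP ubP.
exists r; split=> // i /andP [ri iq].
by apply: contraLR ri => iF; rewrite -leqNgt maxr // iq.
Qed.

Lemma deficit_top_coef (K : fieldType) (F : {pred K}) (u : {poly K}) N :
  (N < size u)%N -> u`_N \notin F -> (forall i, (N < i < size u)%N -> u`_i \in F) ->
  u \isn't a polyOver F /\ deficit F u = ((size u).-1 - N)%N.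
Proof.
move=> Nu uN hi.
have nF : u \isn't a polyOver F.
  by apply: contra uN => /(all_nthP 0); apply.
split=> //; rewrite /deficit (negbTE nF); congr (_ - _)%N.
apply/eqP; rewrite eqn_leq (leq_bigmax_cond (Ordinal Nu)) // andbT.
apply/bigmax_leqP => i; apply: contraR; rewrite -ltnNge => Ni.
by rewrite hi // Ni ltn_ord.
Qed.

Section Subfield.
Variables (K : fieldType) (F : {pred K}).
Hypothesis subF : is_subfield F.

Lemma subfield_divring_closed : divring_closed F.
Proof.
have [_ [F1 [FD [FN [FM FV]]]]] := subF.
by split=> // x y xF yF; [exact/FD/FN | exact/FM/FV].
Qed.

HB.instance Definition _ := GRing.isDivringClosed.Build K F subfield_divring_closed.

Lemma coef_polyOverD_top (v w : {poly K}) N :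
  v \is a polyOver F -> size w = N.+1 -> lead_coef w \notin F ->
  (v + w)`_N \notin F /\ forall i, (N < i)%N -> (v + w)`_i \in F.
Proof.
move=> /polyOverP vF sw wF; split=> [|i Ni].
  by rewrite coefD lead_coefE sw /= in wF *; rewrite rpredDl.
by rewrite coefD [w`_i]nth_default ?sw // addr0.
Qed.

Lemma polyOver_sub_take (q : {poly K}) r :
  (forall i, (r < i < size q)%N -> q`_i \in F) -> q - take_poly r.+1 q \is a polyOver F.
Proof.
move=> hi; apply/polyOverP => i; rewrite coefB coef_take_poly.
case: ltnP => [_|ri]; first by rewrite subrr rpred0.
rewrite subr0; have [iq|iq] := ltnP i (size q); first by rewrite hi ?ri.
by rewrite nth_default ?rpred0.
Qed.

Lemma comp_poly_top_coef (p q : {poly K}) r :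
  (size p).-1%:R != 0 :> K -> (1 < size p)%N -> lead_coef p \in F ->
  (0 < r)%N -> (r < (size q).-1)%N -> q`_r \notin F ->
  (forall i, (r < i < size q)%N -> q`_i \in F) ->
  let N := ((size p).-2 * (size q).-1 + r)%N in
  (p \Po q)`_N \notin F /\ forall i, (N < i)%N -> (p \Po q)`_i \in F.
Proof.
move=> charp p1 pF r0 rm qr hi N.
set n := (size p).-2; set a := lead_coef p.
set S := take_poly r.+1 q; set B := q - S.
have BF : B \is a polyOver F by apply: polyOver_sub_take.
have sp : (size p).-1 = n.+1 by rewrite /n; case: (size p) p1 => [|[]].
have sS : size S = r.+1.
  apply: size_poly_eq_succ; first exact: size_take_poly.
  by apply: contraNneq qr; rewrite coef_take_poly ltnSn => ->; rewrite rpred0.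
have nzS : S != 0 by rewrite -size_poly_eq0 sS.
have sSq : (size S < size q)%N by rewrite sS; lia.
have sB : size B = size q by rewrite size_polyDl // size_opp.
have lB : lead_coef B = lead_coef q by rewrite lead_coefDl // size_opp.
have nza : a != 0 by rewrite lead_coef_eq0 -size_poly_gt0; lia.
have nzb : lead_coef q != 0 by rewrite lead_coef_eq0 -size_poly_gt0; lia.
have sSB : (size S < size B)%N by rewrite sB.
have charn : n.+1%:R != 0 :> K by rewrite -sp.
have [sD lD] := size_lead_coef_subXX sSB nzS charn.
rewrite subrK sB sS lB in sD lD.
have -> : p \Po q = a *: B ^+ n.+1 +
    (a *: (q ^+ n.+1 - B ^+ n.+1) + (p \Po q - a *: q ^+ n.+1)).
  by rewrite scalerBr addrCA addrA subrK addrC subrK.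
have sL := size_comp_poly_sub_lead p q; rewrite sp /= in sL.
have saD : size (a *: (q ^+ n.+1 - B ^+ n.+1)) = N.+1.
  by rewrite size_scale // sD /N -/n; lia.
have sLaD : (size (p \Po q - a *: q ^+ n.+1)%R < N.+1)%N.
  by apply: leq_ltn_trans sL _; rewrite ltnS -addn1 leq_add2l.
apply: coef_polyOverD_top.
- by rewrite polyOverZ ?rpredX // -[a]lead_coefE.
- by rewrite size_polyDl saD.
rewrite lead_coefDl ?saD //.
have bF : lead_coef q \in F by rewrite -lB; exact: polyOverP.
rewrite lead_coefZ lD rpredMl ?unitfE // rpredMl ?unitfE ?rpredMn ?rpredX //.
  by rewrite lead_coefE sS coef_take_poly ltnSn.
by rewrite -mulr_natr mulf_neq0 ?expf_neq0 // -sp.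
Qed.

End Subfield.

Theorem corollary3 (K : fieldType) (F : {pred K})
  (charK0 : [pchar K] =i pred0)
  (subF : is_subfield F) (properF : exists x : K, x \notin F)
  (p q : {poly K})
  (p_nonconst : (1 < size p)%N)
  (q_notF : q \isn't a polyOver F)
  (lead_p : lead_coef p \in F) (lead_q : lead_coef q \in F)
  (q0 : q`_0 \in F) :
  (p \Po q) \isn't a polyOver F /\ deficit F (p \Po q) = deficit F q.
Proof.
have [r [rq qr hi]] := polyOver_last_notin q_notF.
have r0 : (0 < r)%N by case: r qr {rq hi} => //; rewrite q0.
have rm : (r < (size q).-1)%N.
  have : r != (size q).-1 by apply: contraNneq qr => ->; rewrite -lead_coefE.
  lia.
have charp : (size p).-1%:R != 0 :> K by rewrite (pcharf0P _).1 //; lia.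
have [uN uhi] := comp_poly_top_coef subF charp p_nonconst lead_p r0 rm qr hi.
have Nu : (((size p).-2 * (size q).-1 + r) < size (p \Po q))%N.
  rewrite ltnNge; apply: contra uN => /leq_sizeP -> //.
  by have [F0 _] := subF.
have [-> ->] := deficit_top_coef Nu uN (fun i Ni => uhi i (proj1 (andP Ni))).
have [_ ->] := deficit_top_coef rq qr hi.
split=> //; rewrite size_comp_poly.
by case: (size p) p_nonconst => [|[|n]] //= _; rewrite mulSn addnC subnDl.
Qed.
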